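(* In the public bug bounty model described in the context, define $\Omega_\infty(\hat\kappa)=\sum_lw^l\mu^lq^le^{-q^l\hat\kappa}-\underline c$ and let $\tilde\kappa$ be its unique root in $[0,\infty)$. Then the optimal asymptotic participation, i.e. the maximizer of $$W_\infty(\hat\kappa)=\sum_lw^l\mu^l\big(1-e^{-q^l\hat\kappa}\big)-\hat\kappa\underline c$$ over $\hat\kappa\in[0,\kappa_a(\overline v)]$, is $\hat\kappa^*=\min\{\tilde\kappa,\kappa_a(\overline v)\}$, and any prizes $\boldsymbol v^\infty$, $v_a^\infty$ and complexity $q_a^\infty$ (satisfying $\sum_lv^l+v_a\le\overline v$, $v^l\ge0$, $v_a\ge0$, $q_a\in[0,1]$) that solve $\hat\kappa^*=\Psi_\infty(\hat\kappa^*;\boldsymbol v,v_a,q_a)$ are optimal.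
   Context: Public bug bounty model (limit of $n\to\infty$ agents). There are $L$ potential organic bugs; bug $l$ exists with probability $\mu^l\in(0,1]$ (independently), has complexity $q^l\in(0,1]$, and the designer values finding it at $w^l\ge0$. Agents' costs are i.i.d. from a fixed continuous distribution $F$ with full support $[\underline c,\overline c]$, $0<\underline c<\overline c\le\infty$, finite density $f$, $F/f$ non-decreasing. The designer has budget $\overline v>0$ with $\overline v\ge\underline c$, and $\sum_lw^l\mu^lq^l\ge\underline c$. Prizes $v^l\ge0$ for organic bugs, one artificial bug with prize $v_a\ge0$ and complexity $q_a\in[0,1]$. $\Psi_\infty(\hat\kappa;\boldsymbol v,v_a,q_a)=\sum_lv^l\mu^l\frac{1-e^{-q^l\hat\kappa}}{\underline c}+v_a\frac{1-e^{-q_a\hat\kappa}}{\underline c}$; for given prizes, the asymptotic participation is $\kappa^*=\lim_{n\to\infty}nF(c_n)$, with $c_n$ the symmetric equilibrium threshold with $n$ agents, and equals the largest fixed point of $\Psi_\infty$ in $[0,\infty)$; the designer's asymptotic payoff is $W_\infty(\kappa^* )$. $\kappa_a(\overline v)$ is the largest fixed point in $[0,\infty)$ of $\hat\kappa\mapsto\overline v(1-e^{-\hat\kappa})/\underline c$, and the set of achievable participations is $[0,\kappa_a(\overline v)]$. *)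

From mathcomp Require Import all_boot all_order all_algebra.
From mathcomp Require Import all_classical all_reals all_analysis.
Set Implicit Arguments. Unset Strict Implicit. Unset Printing Implicit Defensive.
Import Order.TTheory GRing.Theory Num.Theory.
Local Open Scope ring_scope.

Definition Psi_inf (R : realType) (L : nat) (mu q : 'I_L -> R) (cl : R)
  (v : 'I_L -> R) (va qa : R) (k : R) : R :=
  \sum_(l < L) v l * mu l * (1 - expR (- (q l * k))) / cl
  + va * (1 - expR (- (qa * k))) / cl.

Definition Omega_inf (R : realType) (L : nat) (mu q w : 'I_L -> R) (cl : R) (k : R) : R :=
  \sum_(l < L) w l * mu l * q l * expR (- (q l * k)) - cl.

Definition W_inf (R : realType) (L : nat) (mu q w : 'I_L -> R) (cl : R) (k : R) : R :=
  \sum_(l < L) w l * mu l * (1 - expR (- (q l * k))) - k * cl.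

(* the map k |-> vbar (1 - e^{-k}) / c whose largest fixed point is kappa_a(vbar) *)
Definition kappa_a_map (R : realType) (vbar cl : R) (k : R) : R :=
  vbar * (1 - expR (- k)) / cl.

Definition is_largest_fixed_point (R : realType) (f : R -> R) (k : R) : Prop :=
  [/\ 0 <= k, f k = k & forall x, 0 <= x -> f x = x -> x <= k].

(* budget-feasible prizes and artificial-bug complexity *)
Definition feasible (R : realType) (L : nat) (vbar : R)
  (v : 'I_L -> R) (va qa : R) : Prop :=
  [/\ forall l, 0 <= v l, 0 <= va, 0 <= qa <= 1 & \sum_(l < L) v l + va <= vbar].

(* W_inf is strictly concave with "derivative" Omega_inf, which is strictly
   decreasing; instead of derivatives we use the tangent bound 1 + x <= e^x,
   which gives W(k) <= W(s) + (k - s) Omega(s), strictly when k <> s.  At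
   ks = min(kt, ka) either Omega(ks) = 0, or ks = ka < kt and Omega(ka) > 0, so
   the correction term is <= 0 on [0, ka] and ks is the unique maximiser there.
   Finally every budget-feasible Psi_inf lies below k |-> vbar (1 - e^{-k}) / c
   on [0, oo), so by the intermediate value theorem its largest fixed point is
   at most ka: no prize scheme reaches a participation outside [0, ka]. *)

From mathcomp Require Import all_boot all_order all_algebra.
From mathcomp Require Import all_classical all_reals all_analysis.
From mathcomp Require Import ring lra.
Set Implicit Arguments. Unset Strict Implicit. Unset Printing Implicit Defensive.
Import Order.TTheory GRing.Theory Num.Theory.
Import numFieldNormedType.Exports.
Local Open Scope ring_scope.

Lemma expR_tangent (R : realType) (a b : R) : expR a * (1 + (b - a)) <= expR b.
Proof.
have -> : expR b = expR a * expR (b - a) by rewrite -expRD addrC subrK.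
by rewrite ler_wpM2l ?expR_ge1Dx ?ltW ?expR_gt0.
Qed.

Lemma expR_tangent_strict (R : realType) (a b : R) :
  a != b -> expR a * (1 + (b - a)) < expR b.
Proof.
move=> neq_ab.
have -> : expR b = expR a * expR (b - a) by rewrite -expRD addrC subrK.
rewrite ltr_pM2l ?expR_gt0 //.
by apply: expR_gt1Dx; rewrite subr_eq0 eq_sym.
Qed.

Lemma oneBexpRN_mono (R : realType) (r x : R) :
  0 <= r -> r <= 1 -> 0 <= x -> 0 <= 1 - expR (- (r * x)) <= 1 - expR (- x).
Proof.
move=> r_ge0 r_le1 x_ge0; rewrite subr_ge0 expR_le1 oppr_le0 mulr_ge0 //=.
by rewrite lerB // ler_expR lerN2 ler_piMl.
Qed.

Section Welfare.
Variables (R : realType) (L : nat) (mu q w : 'I_L -> R) (cl : R).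
Hypothesis wmu_ge0 : forall l, 0 <= w l * mu l.

Local Notation W := (W_inf mu q w cl).
Local Notation Omega := (Omega_inf mu q w cl).

Lemma W_inf_tangent_sum (k s : R) :
  W s + (k - s) * Omega s =
  \sum_(l < L) w l * mu l * (1 - expR (- (q l * s))
                             + (k - s) * (q l * expR (- (q l * s)))) - k * cl.
Proof.
rewrite /W_inf /Omega_inf mulrBr mulr_sumr.
have -> : \sum_(l < L) w l * mu l * (1 - expR (- (q l * s))
                                     + (k - s) * (q l * expR (- (q l * s)))) =
          \sum_(l < L) w l * mu l * (1 - expR (- (q l * s)))
          + \sum_(l < L) (k - s) * (w l * mu l * q l * expR (- (q l * s))).
  by rewrite -big_split; apply: eq_bigr => l _ /=; ring.
ring.
Qed.

Lemma W_inf_tangent (k s : R) : W k <= W s + (k - s) * Omega s.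
Proof.
rewrite W_inf_tangent_sum lerB // ler_sum // => l _.
rewrite ler_wpM2l //; have := expR_tangent (- (q l * s)) (- (q l * k)).
lra.
Qed.

Variable l0 : 'I_L.
Hypothesis wmuq_l0_gt0 : 0 < w l0 * mu l0 * q l0.

Let wmu_l0_gt0 : 0 < w l0 * mu l0.
Proof.
rewrite lt_def wmu_ge0 andbT; apply: contraTneq wmuq_l0_gt0 => ->.
by rewrite mul0r ltxx.
Qed.

Let q_l0_neq0 : q l0 != 0.
Proof. by apply: contraTneq wmuq_l0_gt0 => ->; rewrite mulr0 ltxx. Qed.

Lemma W_inf_tangent_strict (k s : R) :
  k != s -> W k < W s + (k - s) * Omega s.
Proof.
move=> neq_ks; rewrite W_inf_tangent_sum ltrBlDr subrK.
rewrite (bigD1 l0) //= [X in _ < X](bigD1 l0) //=.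
apply: ltr_leD.
  rewrite ltr_pM2l //.
  have neq : - (q l0 * s) != - (q l0 * k).
    by rewrite eqr_opp (inj_eq (mulfI q_l0_neq0)) eq_sym.
  have := expR_tangent_strict neq; lra.
apply: ler_sum => l _; rewrite ler_wpM2l //.
have := expR_tangent (- (q l * s)) (- (q l * k)); lra.
Qed.

Lemma W_inf_le_of_tangent (k s : R) : (k - s) * Omega s <= 0 -> W k <= W s.
Proof. by move=> tan_le0; rewrite (le_trans (W_inf_tangent k s)) // gerDl. Qed.

Lemma W_inf_eq_of_tangent (k s : R) :
  (k - s) * Omega s <= 0 -> W k = W s -> k = s.
Proof.
move=> tan_le0 eqW; apply/eqP; apply: contraTT tan_le0 => /W_inf_tangent_strict.
by rewrite eqW -ltrBlDl subrr -ltNge.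
Qed.

Hypothesis q_gt0 : forall l, 0 < q l.

Lemma Omega_inf_decreasing : {homo Omega : x y /~ x < y}.
Proof.
move=> x y lt_xy; rewrite /Omega_inf ltrD2r (bigD1 l0) //= [X in _ < X](bigD1 l0) //=.
apply: ltr_leD.
  by rewrite ltr_pM2l // ltr_expR ltrN2 ltr_pM2l.
apply: ler_sum => l _; rewrite ler_wpM2l ?(mulr_ge0 (wmu_ge0 l) (ltW (q_gt0 l))) //.
by rewrite ler_expR lerN2 ler_wpM2l ?(ltW (q_gt0 l)) ?ltW.
Qed.

Lemma Omega_inf_inj : injective Omega.
Proof.
move=> x y eqO; case: (ltgtP x y) => // /Omega_inf_decreasing;
by rewrite eqO ltxx.
Qed.

Lemma Omega_inf_min_root (kt ka k : R) :
  Omega kt = 0 -> k <= ka ->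
  (k - Num.min kt ka) * Omega (Num.min kt ka) <= 0.
Proof.
move=> root_kt le_k_ka; case: (leP kt ka) => [_|lt_ka_kt].
  by rewrite root_kt mulr0.
rewrite mulr_le0_ge0 ?subr_le0 // -root_kt ltW //.
exact: Omega_inf_decreasing.
Qed.

End Welfare.

Lemma le_largest_fixed_point (R : realType) (f : R -> R) (k M ka : R) :
  continuous f -> is_largest_fixed_point f ka ->
  0 <= k -> k <= f k -> k <= M -> f M <= M -> k <= ka.
Proof.
move=> cont_f [_ _ ka_max] k_ge0 k_le_fk le_kM fM_le.
pose g x := f x - x.
have cont_g : {within `[k, M], continuous g}%classic.
  by apply: continuous_subspaceT => x; apply: cvgB; [exact: cont_f | exact: cvg_id].
have range0 : Num.min (g k) (g M) <= 0 <= Num.max (g k) (g M).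
  by rewrite /g ge_min le_max; apply/andP; split; apply/orP; [right|left]; lra.
have [c] := IVT le_kM cont_g range0; rewrite in_itv /= => /andP[le_kc _] /eqP.
rewrite /g subr_eq0 => /eqP fix_c.
exact: le_trans le_kc (ka_max c (le_trans k_ge0 le_kc) fix_c).
Qed.

Section Achievable.
Variables (R : realType) (L : nat) (mu q : 'I_L -> R) (cl vbar : R).
Hypothesis cl_gt0 : 0 < cl.

Lemma continuous_kappa_a_map : continuous (kappa_a_map vbar cl).
Proof.
move=> x; apply: cvgM; last exact: cvg_cst.
apply: cvgM; first exact: cvg_cst.
apply: cvgB; first exact: cvg_cst.
apply: (continuous_comp (f := -%R)); first exact: oppr_continuous.
exact: continuous_expR.
Qed.

Lemma kappa_a_map_le (x : R) : 0 <= vbar -> kappa_a_map vbar cl x <= vbar / cl.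
Proof.
move=> vbar_ge0; have e_gt0 := expR_gt0 (- x).
rewrite /kappa_a_map ler_wpM2r ?invr_ge0 ?(ltW cl_gt0) //; nra.
Qed.

Hypothesis mu_bound : forall l, 0 < mu l <= 1.
Hypothesis q_bound : forall l, 0 < q l <= 1.

Lemma Psi_inf_le_kappa_a_map (v : 'I_L -> R) (va qa x : R) :
  feasible vbar v va qa -> 0 <= x ->
  Psi_inf mu q cl v va qa x <= kappa_a_map vbar cl x.
Proof.
move=> [v_ge0 va_ge0 /andP[qa_ge0 qa_le1] budget] x_ge0.
have E_ge0 : 0 <= 1 - expR (- x) by rewrite subr_ge0 expR_le1 oppr_le0.
have cl_inv_ge0 : 0 <= cl^-1 by rewrite invr_ge0 ltW.
rewrite /Psi_inf /kappa_a_map.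
apply: (@le_trans _ _ ((\sum_(l < L) v l + va) * (1 - expR (- x)) / cl)); last first.
  by rewrite ler_wpM2r // ler_wpM2r.
rewrite mulrDl mulrDl mulr_suml mulr_suml; apply: lerD; last first.
  rewrite ler_wpM2r // ler_wpM2l //.
  by have /andP[_ ->] := oneBexpRN_mono qa_ge0 qa_le1 x_ge0.
apply: ler_sum => l _; rewrite ler_wpM2r // -mulrA ler_wpM2l //.
have /andP[mu_gt0 mu_le1] := mu_bound l.
have /andP[q_gt0 q_le1] := q_bound l.
have /andP[_ E_le] := oneBexpRN_mono (ltW q_gt0) q_le1 x_ge0.
nra.
Qed.

Lemma achievable_le_kappa_a (v : 'I_L -> R) (va qa k ka : R) :
  cl <= vbar -> is_largest_fixed_point (kappa_a_map vbar cl) ka ->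
  feasible vbar v va qa -> is_largest_fixed_point (Psi_inf mu q cl v va qa) k ->
  k <= ka.
Proof.
move=> cl_le_vbar ka_fix feas [k_ge0 fix_k _].
have vbar_ge0 : 0 <= vbar by rewrite (le_trans (ltW cl_gt0)).
apply: (le_largest_fixed_point (M := k + vbar / cl) continuous_kappa_a_map ka_fix k_ge0).
- by rewrite -{1}fix_k Psi_inf_le_kappa_a_map.
- by rewrite lerDl divr_ge0 // ltW.
- by rewrite (le_trans (kappa_a_map_le _ vbar_ge0)) // lerDr.
Qed.

End Achievable.

Theorem theorem3 (R : realType) (L : nat) (mu q w : 'I_L -> R) (cl vbar : R)
  (hmu : forall l, 0 < mu l <= 1)
  (hq : forall l, 0 < q l <= 1)
  (hw : forall l, 0 <= w l)
  (hcl : 0 < cl)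
  (hvbar : cl <= vbar)
  (hsum : cl <= \sum_(l < L) w l * mu l * q l)
  (kt ka : R)
  (hkt : 0 <= kt /\ Omega_inf mu q w cl kt = 0)
  (hka : is_largest_fixed_point (kappa_a_map vbar cl) ka) :
  let ks := Num.min kt ka in
  [/\ (forall x, 0 <= x -> Omega_inf mu q w cl x = 0 -> x = kt),
      0 <= ks <= ka,
      (forall k, 0 <= k <= ka -> W_inf mu q w cl k <= W_inf mu q w cl ks),
      (forall k, 0 <= k <= ka -> W_inf mu q w cl k = W_inf mu q w cl ks -> k = ks) &
      (forall (v : 'I_L -> R) (va qa : R),
         feasible vbar v va qa ->
         is_largest_fixed_point (Psi_inf mu q cl v va qa) ks ->
         forall (v' : 'I_L -> R) (va' qa' k' : R),
           feasible vbar v' va' qa' ->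
           is_largest_fixed_point (Psi_inf mu q cl v' va' qa') k' ->
           W_inf mu q w cl k' <= W_inf mu q w cl ks)].
Proof.
move=> ks; have [kt_ge0 root_kt] := hkt; have [ka_ge0 _ _] := hka.
have wmu_ge0 l : 0 <= w l * mu l by have /andP[/ltW ? _] := hmu l; exact: mulr_ge0.
have q_gt0 l : 0 < q l by have /andP[] := hq l.
have [l0 /andP[_ wmuq_l0_gt0]] : exists l0, true && (0 < w l0 * mu l0 * q l0).
  apply: psumr_neq0P => [l _|]; first exact: mulr_ge0 (wmu_ge0 l) (ltW (q_gt0 l)).
  by apply/eqP; rewrite gt_eqF // (lt_le_trans hcl hsum).
have tangent_le0 k : 0 <= k <= ka -> (k - ks) * Omega_inf mu q w cl ks <= 0.
  by move=> /andP[_ le_k_ka]; exact (Omega_inf_min_root wmu_ge0 wmuq_l0_gt0 q_gt0 root_kt le_k_ka).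
have W_max k : 0 <= k <= ka -> W_inf mu q w cl k <= W_inf mu q w cl ks.
  by move=> /tangent_le0; apply: W_inf_le_of_tangent.
split.
- move=> x _ root_x; apply: (Omega_inf_inj (cl := cl) wmu_ge0 wmuq_l0_gt0 q_gt0).
  by rewrite root_x root_kt.
- by rewrite ge_min lexx orbT le_min kt_ge0 ka_ge0.
- exact: W_max.
- move=> k /tangent_le0 tan_le0.
  exact (W_inf_eq_of_tangent wmu_ge0 wmuq_l0_gt0 tan_le0).
- move=> v va qa _ _ v' va' qa' k' feas' fix_k'; apply: W_max.
  have [k'_ge0 _ _] := fix_k'.
  by rewrite k'_ge0 (achievable_le_kappa_a hcl hmu hq hvbar hka feas' fix_k').
Qed.
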